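(* Let $\mathcal{F}=\{f_i\}_{i=1}^n$ be a basis for $\mathbb{R}^n$ and let $k$ be a positive integer. Then there exists a $k$-dimensional maximal $\mathcal{F}$-PR subspace if and only if $1\le k\le[(n+1)/2]$, where $[a]$ denotes the integer part of $a$.
   Context: A finite sequence $\{g_i\}$ in a subspace $M\subseteq\mathbb{R}^n$ is a phase-retrievable frame for $M$ if it spans $M$ and whenever $x,y\in M$ satisfy $|\langle x,g_i\rangle|=|\langle y,g_i\rangle|$ for all $i$, then $x=\pm y$. For a finite sequence $\mathcal{F}=\{f_i\}_{i=1}^N$ spanning $\mathbb{R}^n$, a subspace $M$ is an $\mathcal{F}$-PR subspace (phase-retrievable subspace with respect to $\mathcal{F}$) if $\{P_Mf_i\}_{i=1}^N$ is a phase-retrievable frame for $M$, where $P_M$ is the orthogonal projection onto $M$. An $\mathcal{F}$-PR subspace is maximal if it is not a proper subspace of another $\mathcal{F}$-PR subspace. *)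

(* vectors of R^n are row vectors 'rV[R]_n over R : realType;
   subspaces of R^n are represented by square matrices 'M[R]_n through their
   row space (mxalgebra). *)
From HB Require Import structures.
From mathcomp Require Import all_boot all_order all_algebra.
From mathcomp Require Import reals.
Set Implicit Arguments. Unset Strict Implicit. Unset Printing Implicit Defensive.
Import Order.TTheory GRing.Theory Num.Theory.
Local Open Scope ring_scope.

Section PR.
Variable R : realType.
Variable n : nat.

Definition dotv (x y : 'rV[R]_n) : R := \sum_(j < n) x 0 j * y 0 j.

Definition orth_proj_mx (M : 'M[R]_n) : 'M[R]_n :=
  let B := row_base M in (B^T *m invmx (B *m B^T)) *m B.

Definition orth_proj (M : 'M[R]_n) (x : 'rV[R]_n) : 'rV[R]_n :=
  x *m orth_proj_mx M.

Definition PR_frame (N : nat) (M : 'M[R]_n) (g : 'I_N -> 'rV[R]_n) : Prop :=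
  [/\ (forall i, (g i <= M)%MS),
      ((\matrix_(i < N) g i) == M)%MS
    & forall x y : 'rV[R]_n, (x <= M)%MS -> (y <= M)%MS ->
        (forall i, `|dotv x (g i)| = `|dotv y (g i)|) -> x = y \/ x = - y].

Definition F_PR_subspace (N : nat) (f : 'I_N -> 'rV[R]_n) (M : 'M[R]_n) : Prop :=
  PR_frame M (fun i => orth_proj M (f i)).

Definition maximal_F_PR_subspace (N : nat) (f : 'I_N -> 'rV[R]_n)
    (M : 'M[R]_n) : Prop :=
  F_PR_subspace f M /\
  ~ (exists M' : 'M[R]_n, F_PR_subspace f M' /\ (M < M')%MS).

Definition is_basis (f : 'I_n -> 'rV[R]_n) : Prop :=
  row_free (\matrix_(i < n) f i) /\ row_full (\matrix_(i < n) f i).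

End PR.

(* In the coordinates x |-> (<x, f_i>)_i an F-PR subspace becomes a space of
   vectors determined up to sign by the moduli of their entries.  Such a space
   contains no two nonzero vectors u, v with disjoint supports, since u + v and
   u - v have entries of equal moduli; but a space of dimension k contains a
   nonzero vector vanishing on any k - 1 prescribed coordinates, so splitting
   the coordinates into k - 1 and n - k + 1 of them forces 2k - 1 <= n.
   Conversely, the values at 0, ..., 2k - 2 of the polynomials of degree < k,
   padded with zeros, form such a space: |p| = |q| at 2k - 1 points makes
   (p - q)(p + q) vanish, so p = +-q.  It is maximal, as any larger space
   contains a nonzero vector vanishing at k - 1, ..., 2k - 2, whose support is
   disjoint from that of a nonzero polynomial vanishing at 0, ..., k - 2. *)

From HB Require Import structures.
From mathcomp Require Import all_boot all_order all_algebra.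
From mathcomp Require Import reals zify.
Import Order.TTheory GRing.Theory Num.Theory.
Local Open Scope ring_scope.
Set Implicit Arguments. Unset Strict Implicit. Unset Printing Implicit Defensive.

Lemma mulmx_trmx_eq0 (R : realDomainType) n (x : 'rV[R]_n) :
  x *m x^T = 0 -> x = 0.
Proof.
move=> /(congr1 (fun A : 'M_1 => A 0 0)); rewrite !mxE => sq0.
apply/rowP => j; rewrite mxE; apply/eqP; rewrite -[_ == 0]orbb -mulf_eq0.
have sq_ge0 i : true -> 0 <= x 0 i * x^T i 0 by rewrite mxE -expr2 sqr_ge0.
by have /eqP := psumr_eq0P sq_ge0 sq0 (i := j) isT; rewrite mxE.
Qed.

Section OrthogonalProjection.
Variables (R : realType) (n : nat) (M : 'M[R]_n).
Local Notation B := (row_base M).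
Local Notation P := (orth_proj_mx M).

Lemma dotvE (x y : 'rV[R]_n) : dotv x y = (x *m y^T) 0 0.
Proof. by rewrite /dotv mxE; apply: eq_bigr => j _; rewrite mxE. Qed.

Lemma unitmx_row_base_gram : B *m B^T \in unitmx.
Proof.
rewrite -row_free_unit; apply: inj_row_free => v vBBt0.
have /mulmx_trmx_eq0/eqP : (v *m B) *m (v *m B)^T = 0.
  by rewrite trmx_mul mulmxA -(mulmxA v) vBBt0 mul0mx.
by rewrite mulmx_free_eq0 ?row_base_free // => /eqP.
Qed.

Lemma row_base_orth_proj_mx : B *m P = B.
Proof.
rewrite /orth_proj_mx; set C := row_base M.
by rewrite !mulmxA (mulmxV unitmx_row_base_gram) mul1mx.
Qed.

Lemma orth_proj_mx_id (x : 'rV[R]_n) : (x <= M)%MS -> x *m P = x.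
Proof.
move=> xM; have /submxP[D ->] : (x <= B)%MS by rewrite eq_row_base.
by rewrite -mulmxA row_base_orth_proj_mx.
Qed.

Lemma trmx_orth_proj_mx : P^T = P.
Proof.
rewrite /orth_proj_mx; move: (row_base M) => C.
by rewrite !trmx_mul trmx_inv trmx_mul !trmxK mulmxA.
Qed.

Lemma dotv_orth_proj (x y : 'rV[R]_n) : (x <= M)%MS ->
  dotv x (orth_proj M y) = dotv x y.
Proof.
by move=> xM; rewrite !dotvE trmx_mul trmx_orth_proj_mx mulmxA orth_proj_mx_id.
Qed.

Lemma orth_proj_mx_eq : (P == M)%MS.
Proof.
apply/andP; split; rewrite -(eq_row_base M); first exact: submxMl.
by rewrite -{1}row_base_orth_proj_mx submxMl.
Qed.

Lemma orth_proj_sub (y : 'rV[R]_n) : (orth_proj M y <= M)%MS.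
Proof. by rewrite -(eqmxP orth_proj_mx_eq) submxMl. Qed.

End OrthogonalProjection.

Definition PR_on (R : numFieldType) (m n N : nat)
    (M : 'M[R]_(m, n)) (A : 'M[R]_(n, N)) : Prop :=
  forall x y : 'rV[R]_n, (x <= M)%MS -> (y <= M)%MS ->
    (forall j, `|(x *m A) 0 j| = `|(y *m A) 0 j|) -> x = y \/ x = - y.

Section FrameCoordinates.
Variables (R : realType) (n N : nat) (f : 'I_N -> 'rV[R]_n).
Local Notation F := (\matrix_(i < N) f i).

Lemma dotv_frame (x : 'rV[R]_n) i : dotv x (f i) = (x *m F^T) 0 i.
Proof. by rewrite /dotv mxE; apply: eq_bigr => j _; rewrite !mxE. Qed.

Lemma F_PR_subspaceP (M : 'M[R]_n) :
  row_full F -> F_PR_subspace f M <-> PR_on M F^T.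
Proof.
move=> Ffull; split.
  case=> _ _ PR x y xM yM eq_abs; apply: PR => // i.
  by rewrite !dotv_orth_proj // !dotv_frame.
move=> PR; split.
- by move=> i; exact: orth_proj_sub.
- have -> : \matrix_(i < N) orth_proj M (f i) = F *m orth_proj_mx M.
    by apply/row_matrixP => i; rewrite row_mul !rowK.
  apply/eqmxP; apply: eqmx_trans (eqmxMfull _ Ffull) _.
  exact/eqmxP/orth_proj_mx_eq.
- move=> x y xM yM eq_abs; apply: PR => // i.
  by rewrite -!dotv_frame -(dotv_orth_proj _ xM) -(dotv_orth_proj _ yM).
Qed.

End FrameCoordinates.

Lemma card_ord_range (N a b : nat) :
  (#|[set j : 'I_N | a <= j < b]| <= b - a)%N.
Proof.
rewrite cardE -(size_map val) -(size_iota a (b - a)).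
apply: uniq_leq_size; first by rewrite (map_inj_uniq val_inj) enum_uniq.
move=> _ /mapP[j + ->]; rewrite mem_enum inE mem_iota => /andP[aj jb].
by rewrite aj subnKC // (leq_trans aj (ltnW jb)).
Qed.

Section PhaseRetrieval.
Variables (R : realFieldType) (n N : nat) (A : 'M[R]_(n, N)).

Lemma PR_on_disjoint_supports m (M : 'M[R]_(m, n)) (u v : 'rV[R]_n) :
  PR_on M A -> (u <= M)%MS -> (v <= M)%MS ->
  (forall j, (u *m A) 0 j = 0 \/ (v *m A) 0 j = 0) -> u = 0 \/ v = 0.
Proof.
move=> PR uM vM disj.
have eq_opp0 (w : 'rV[R]_n) : w = - w -> w = 0.
  move=> /(congr1 (+%R w)); rewrite subrr -mulr2n -scaler_nat => /eqP.
  by rewrite scaler_eq0 pnatr_eq0 => /eqP.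
have [uv|uv] : u + v = u - v \/ u + v = - (u - v).
  apply: PR; rewrite ?addmx_sub ?eqmx_opp // => j.
  rewrite mulmxDl mulmxBl; move: (disj j); set a := u *m A; set b := v *m A.
  by rewrite !mxE => -[] ->; rewrite ?add0r ?sub0r ?normrN ?addr0 ?subr0.
- by right; apply: eq_opp0; apply: (addrI u).
- by left; apply: eq_opp0; move: uv; rewrite opprB addrC => /addrI.
Qed.

Lemma exists_vanishing_row m (M : 'M[R]_(m, n)) (S : {set 'I_N}) :
  (#|S| < \rank M)%N ->
  exists v : 'rV[R]_n,
    [/\ (v <= M)%MS, v != 0 & {in S, forall j, (v *m A) 0 j = 0}].
Proof.
move=> ltSM; pose Z := colsub (enum_val : 'I_#|S| -> 'I_N) (M *m A).
have : ~~ (kermx Z <= kermx M)%MS.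
  apply: contraL ltSM => /mxrankS; rewrite !mxrank_ker -leqNgt.
  by have := rank_leq_col Z; have := rank_leq_row M; lia.
case/row_subPn => i; rewrite sub_kermx => wM0.
exists (row i (kermx Z) *m M); split => //; first exact: submxMl.
move=> j Sj; rewrite -(enum_rankK_in Sj Sj).
have /rowP/(_ (enum_rank_in Sj j)) : row i (kermx Z) *m Z = 0.
  by rewrite -row_mul mulmx_ker row0.
by rewrite mulmx_colsub mulmxA !mxE.
Qed.

Lemma PR_on_rank m (M : 'M[R]_(m, n)) :
  PR_on M A -> (0 < \rank M)%N -> ((\rank M).*2.-1 <= N)%N.
Proof.
move=> PR rk_gt0; rewrite leqNgt; apply/negP => rk_big.
set k := \rank M in rk_gt0 rk_big *.
have low : (#|[set j : 'I_N | 0 <= j < k.-1]| < k)%N.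
  by apply: leq_ltn_trans (card_ord_range _ _ _) _; rewrite subn0 prednK.
have high : (#|[set j : 'I_N | k.-1 <= j < N]| < k)%N.
  by apply: leq_ltn_trans (card_ord_range _ _ _) _; lia.
have [u [uM u0 u_van]] := exists_vanishing_row low.
have [v [vM v0 v_van]] := exists_vanishing_row high.
have [] := PR_on_disjoint_supports PR uM vM.
- move=> j; case: (ltnP j k.-1) => jk.
    by left; apply: u_van; rewrite inE jk.
  by right; apply: v_van; rewrite inE jk ltn_ord.
- by move=> u_eq0; rewrite u_eq0 eqxx in u0.
- by move=> v_eq0; rewrite v_eq0 eqxx in v0.
Qed.

Lemma PR_on_mulmx p m (M : 'M[R]_(m, p)) (G : 'M[R]_(p, n)) :
  PR_on M (G *m A) -> PR_on (M *m G) A.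
Proof.
move=> PR _ _ /submxP[x ->] /submxP[y ->] eq_abs.
have [xy|xy] : x *m M = y *m M \/ x *m M = - (y *m M).
  by apply: PR; rewrite ?submxMl // => j; rewrite !mulmxA -!(mulmxA _ M) eq_abs.
- by left; rewrite mulmxA xy -mulmxA.
- by right; rewrite mulmxA xy mulNmx -mulmxA.
Qed.

End PhaseRetrieval.

Lemma poly_natr_roots_eq0 (R : numDomainType) m (q : {poly R}) :
  (size q <= m)%N -> (forall j, (j < m)%N -> q.[j%:R] = 0) -> q = 0.
Proof.
move=> qm q_roots; apply/eqP/negP => /negP q0.
suff: (m < size q)%N by rewrite ltnNge qm.
rewrite -[m in (m < _)%N](size_iota 0) -(size_map (fun j => j%:R : R)).
apply: max_poly_roots q0 _ _.
- apply/allP => x /mapP[j]; rewrite mem_iota => /andP[_ jm] ->.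
  exact/eqP/q_roots.
- by rewrite map_inj_uniq ?iota_uniq // => i j /eqP; rewrite eqr_nat => /eqP.
Qed.

Section TruncatedVandermonde.
Variables (R : realFieldType) (k N : nat).
Hypothesis kN : ((k.*2).-1 <= N)%N.

(* The zero columns j >= 2k - 1 are what make the subspace maximal. *)
Definition vander_mx : 'M[R]_(k, N) :=
  \matrix_(i, j) if (j < (k.*2).-1)%N then j%:R ^+ i else 0.

Lemma vander_mx_coord (w : 'rV[R]_k) j :
  (w *m vander_mx) 0 j = if (j < (k.*2).-1)%N then (rVpoly w).[j%:R] else 0.
Proof.
rewrite mxE (horner_coef_wide _ (size_poly _ _)); case: ifP => jk.
  by apply: eq_bigr => i _; rewrite mxE jk coef_rVpoly_ord.
by apply: big1 => i _; rewrite mxE jk mulr0.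
Qed.

Lemma vander_mx_vanish (x : 'rV[R]_N) (j : 'I_N) :
  (x <= vander_mx)%MS -> ((k.*2).-1 <= j)%N -> x 0 j = 0.
Proof. by case/submxP => w -> kj; rewrite vander_mx_coord ltnNge kj. Qed.

Lemma row_free_vander_mx : row_free vander_mx.
Proof.
apply/inj_row_free => w w0; apply: (can_inj rVpolyK); rewrite linear0.
apply: (poly_natr_roots_eq0 (size_poly _ _)) => j jk.
have jN : (j < N)%N by lia.
have /rowP/(_ (Ordinal jN)) := w0.
by rewrite vander_mx_coord mxE /=; case: ifP => //; lia.
Qed.

Lemma PR_on_vander_mx : PR_on vander_mx 1%:M.
Proof.
move=> _ _ /submxP[wx ->] /submxP[wy ->]; rewrite !mulmx1 => eq_abs.
set p := rVpoly wx; set q := rVpoly wy.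
have : (p - q) * (p + q) = 0.
  apply: (@poly_natr_roots_eq0 _ (k.*2).-1).
    have sizeB : (size (p - q)%R <= k)%N by rewrite -linearB; apply: size_poly.
    have sizeD : (size (p + q)%R <= k)%N by rewrite -linearD; apply: size_poly.
    apply: leq_trans (size_polyMleq _ _) _.
    by rewrite -!subn1 leq_sub2r // -addnn leq_add.
  move=> j jk; have jN : (j < N)%N by lia.
  have := eq_abs (Ordinal jN); rewrite !vander_mx_coord /= jk -/p -/q => pq.
  have := congr1 (fun r => r ^+ 2) pq; rewrite !real_normK ?num_real // => pq2.
  by rewrite !hornerE -subr_sqr pq2 subrr.
move/eqP; rewrite mulf_eq0 subr_eq0 addr_eq0 => /orP[] /eqP pq.
- by left; rewrite (can_inj rVpolyK pq).
- right; rewrite (can_inj rVpolyK (_ : p = rVpoly (- wy))) ?mulNmx //.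
  by rewrite linearN.
Qed.

Lemma PR_on_vander_maximal n p q (A : 'M[R]_(n, N))
    (W : 'M[R]_(p, n)) (M' : 'M[R]_(q, n)) :
  (0 < k)%N -> \rank W = k ->
  (forall x : 'rV[R]_n, (x <= W)%MS -> (x *m A <= vander_mx)%MS) ->
  (W < M')%MS -> ~ PR_on M' A.
Proof.
move=> k_gt0 rkW WA ltWM' PR.
have low : (#|[set j : 'I_N | 0 <= j < k.-1]| < \rank W)%N.
  by apply: leq_ltn_trans (card_ord_range _ _ _) _; rewrite rkW subn0 prednK.
have mid : (#|[set j : 'I_N | k.-1 <= j < (k.*2).-1]| < \rank M')%N.
  apply: leq_ltn_trans (card_ord_range _ _ _) _.
  by have := rank_ltmx ltWM'; rewrite rkW -addnn; lia.
have [u [uW u0 u_van]] := exists_vanishing_row A low.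
have [v [vM' v0 v_van]] := exists_vanishing_row A mid.
have [] := PR_on_disjoint_supports PR (submx_trans uW (ltmxW ltWM')) vM'.
- move=> j; case: (ltnP j k.-1) => jk.
    by left; apply: u_van; rewrite inE jk.
  case: (ltnP j (k.*2).-1) => jk2.
    by right; apply: v_van; rewrite inE jk jk2.
  by left; apply: vander_mx_vanish jk2; apply: WA.
- by move=> u_eq0; rewrite u_eq0 eqxx in u0.
- by move=> v_eq0; rewrite v_eq0 eqxx in v0.
Qed.

End TruncatedVandermonde.

Unset Implicit Arguments.
Set Strict Implicit.

Theorem proposition3p1 (R : realType) (n : nat) (f : 'I_n -> 'rV[R]_n) (k : nat) :
  is_basis f -> (0 < k)%N ->
  ((exists M : 'M[R]_n, \rank M = k /\ maximal_F_PR_subspace f M) <->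
   (1 <= k <= (n + 1) %/ 2)%N).
Proof.
move=> [Ffree Ffull] k_gt0; rewrite k_gt0 leq_divRL //=; split.
  case=> M [rkM [/(F_PR_subspaceP _ Ffull) PR _]].
  by have := PR_on_rank PR; rewrite rkM -addnn => /(_ k_gt0); lia.
move=> k2n; have kn : ((k.*2).-1 <= n)%N by rewrite -addnn; lia.
set G := (\matrix_(i < n) f i)^T.
have G_unit : G \in unitmx by rewrite unitmx_tr -row_free_unit.
set W := vander_mx R k n *m invmx G.
have rkW : \rank W = k.
  rewrite mxrankMfree ?row_free_unit ?unitmx_inv //.
  exact/eqP/(row_free_vander_mx R kn).
exists <<W>>%MS; split; first by rewrite genmxE.
split.
  apply/(F_PR_subspaceP _ Ffull) => x y; rewrite !genmxE; apply: PR_on_mulmx.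
  by rewrite mulVmx //; exact: PR_on_vander_mx kn.
case=> M' [/(F_PR_subspaceP _ Ffull) PR' ltWM'].
apply: (PR_on_vander_maximal kn k_gt0 _ _ ltWM' PR'); first by rewrite genmxE.
move=> x; rewrite genmxE => /submxP[D ->].
by rewrite -mulmxA mulmxKV // submxMl.
Qed.
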